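(* Let $K\ge2$ and $b\in\mathbb{R}$. The operator $A+B$ on $\ell^2(\mathcal{C})$ has only pure point spectrum, and $\ell^2(\mathcal{C})$ has an orthonormal basis of eigenfunctions of $A+B$ that are compactly (finitely) supported.
   Context: The canopy graph $\mathcal{C}$: starting from an infinite outermost layer $\partial\mathcal{C}$, each layer is partitioned into sets of $K$ elements, the elements of each set being joined to a common vertex of the next layer, recursively for infinitely many layers. $A$ is the adjacency operator of $\mathcal{C}$, $(A\psi)(x)=\sum_{y:\mathrm{dist}(x,y)=1}\psi(y)$, and $B$ is multiplication by the constant $b$ on $\partial\mathcal{C}$ and by $0$ elsewhere. *)

From HB Require Import structures.
From mathcomp Require Import all_boot all_order all_algebra.
From mathcomp Require Import reals complex.
Set Implicit Arguments. Unset Strict Implicit. Unset Printing Implicit Defensive.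
Import Order.TTheory GRing.Theory Num.Theory.
Local Open Scope ring_scope.
Local Open Scope complex_scope.

(* A vertex is a pair (n, j) : nat * nat, where n is the layer (n = 0 is the
   outermost layer \partial C) and j indexes the (countably infinitely many)
   vertices of layer n.  Layer n is partitioned into the blocks
   {K*j, ..., K*j + K-1}, and the K elements of block j are all joined to the
   common vertex (n+1, j) of the next layer.    *)
Definition vertex := (nat * nat)%type.

Definition parent (K : nat) (x : vertex) : vertex := (x.1.+1, (x.2 %/ K)%N).

Definition adj (K : nat) (x y : vertex) : bool :=
  (y == parent K x) || (x == parent K y).

(* the (finite, duplicate-free) list of neighbours of x, i.e. of all y with
   adj K x y (for K >= 1) *)
Definition nbrs (K : nat) (x : vertex) : seq vertex :=
  parent K x :: (if x.1 is n.+1 then [seq (n, K * x.2 + i)%N | i <- iota 0 K]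
                 else [::]).

Section Ops.
Variable R : realType.
Local Notation C := R[i].

Definition adjA (K : nat) (psi : vertex -> C) : vertex -> C :=
  fun x => \sum_(y <- nbrs K x) psi y.

Definition potB (b : R) (psi : vertex -> C) : vertex -> C :=
  fun x => if x.1 == 0%N then b%:C * psi x else 0.

Definition AplusB (K : nat) (b : R) (psi : vertex -> C) : vertex -> C :=
  fun x => adjA K psi x + potB b psi x.

Definition sqnorm (z : C) : R := complex.Re z ^+ 2 + complex.Im z ^+ 2.

(* psi belongs to l^2(C): the sums of |psi x|^2 over finite sets of vertices
   are uniformly bounded (equivalently sum_x |psi x|^2 < oo). *)
Definition l2 (psi : vertex -> C) : Prop :=
  exists M : R, forall s : seq vertex, uniq s ->
    \sum_(x <- s) sqnorm (psi x) <= M.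

(* <f, g> computed over a duplicate-free list s containing the support of g *)
Definition finner (s : seq vertex) (f g : vertex -> C) : C :=
  \sum_(x <- s) f x * conjc (g x).

(* The family e (indexed by an arbitrary type I)
   has: finite supports (contained in the duplicate-free lists supp i);
   each e i is an eigenfunction of A + B with eigenvalue lam i;
   orthonormality; and completeness (the only l^2 vector orthogonal to all
   e i is 0, i.e. the orthonormal family is maximal = an orthonormal basis). *)
Definition has_fin_supp_eigen_ONB (K : nat) (b : R) : Prop :=
  exists (I : Type) (e : I -> vertex -> C) (lam : I -> C)
         (supp : I -> seq vertex),
    [/\ (forall i, uniq (supp i) /\ forall x, x \notin supp i -> e i x = 0),
        (forall i x, AplusB K b (e i) x = lam i * e i x),
        (forall i, finner (supp i) (e i) (e i) = 1),
        (forall i j, i <> j -> finner (supp j) (e i) (e j) = 0) &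
        (forall psi, l2 psi ->
           (forall i, finner (supp i) psi (e i) = 0) -> forall x, psi x = 0)].
End Ops.

From HB Require Import structures.
From mathcomp Require Import all_boot all_order all_algebra.
From mathcomp Require Import reals complex.
From mathcomp Require Import mxred sesquilinear spectral.
Set Implicit Arguments. Unset Strict Implicit. Unset Printing Implicit Defensive.
Import Order.TTheory GRing.Theory Num.Theory.
Local Open Scope ring_scope.

(* Let V_n be the space of functions on the finite set [desc n] of strict
   descendants of the vertex (n, 0) whose sum over every layer vanishes.  The
   finite restriction of A + B to [desc n] is self-adjoint and maps V_n into
   itself, so the orthogonal complement W_n of V_n in V_(n+1) has an
   orthonormal basis of eigenvectors of A + B: diagonalize simultaneously A + B
   and the orthogonal projection onto W_n.  Since they have vanishing layer
   sums, in particular on the top layer next to the root (n+1, 0), these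
   vectors are eigenfunctions of A + B on the whole graph.  The spaces W_n are
   mutually orthogonal, and a function orthogonal to all of them is orthogonal
   to every V_n, hence constant on each layer; since the layers are infinite,
   an l2 function of this kind vanishes. *)

Section HermitianCodiagonalization.
Local Open Scope sesquilinear_scope.
Variables (C : numClosedFieldType) (n : nat).

Lemma unitary_conj_hermitian_trig_diag (U X : 'M[C]_n) :
  U \is unitarymx -> X^t* = X -> similar_trig U X -> is_diag_mx (U *m X *m U^t*).
Proof.
move=> Uu hX; rewrite /similar_to conjumx ?unitarymx_unit // invmx_unitary //.
move=> /is_trig_mxP trig; apply/is_diag_mxP => i j; rewrite neq_ltn.
case/orP => [lt_ij|lt_ji]; first exact: trig.
set Y := U *m X *m U^t* in trig *.
have hermY : Y^t* = Y by rewrite /Y !trmx_mul !map_mxM trmxCK hX mulmxA.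
by rewrite -hermY mxE mxE trig // conjC0.
Qed.

Lemma hermitian_codiagonalization (A B : 'M[C]_n) :
  A^t* = A -> B^t* = B -> A *m B = B *m A ->
  {U : 'M[C]_n | U \is unitarymx &
     is_diag_mx (U *m A *m U^t*) && is_diag_mx (U *m B *m U^t*)}.
Proof.
move=> hA hB /cotrigonalization2/sig2W[U Uu /andP[tA tB]].
by exists U; rewrite ?unitary_conj_hermitian_trig_diag.
Qed.

End HermitianCodiagonalization.

Lemma sum_indicator (T : eqType) (V : pzSemiRingType) (s : seq T) x (F : T -> V) :
  uniq s -> \sum_(y <- s) (x == y)%:R * F y = (x \in s)%:R * F x.
Proof.
move=> s_uniq; have [xs|xNs] := boolP (x \in s); last first.
  rewrite mul0r big_seq big1 // => y ys.
  by case: eqP ys => [<-|_]; rewrite ?(negbTE xNs) ?mul0r.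
rewrite (big_rem x xs) /= eqxx mul1r big_seq big1 ?addr0 // => y.
by rewrite mem_rem_uniq // inE eq_sym => /andP[/negbTE-> _]; rewrite mul0r.
Qed.

Lemma eq_sum_supported (T : eqType) (V : nmodType) (s t : seq T) (F : T -> V) :
  uniq s -> uniq t -> (forall y, y \notin s -> F y = 0) ->
  (forall y, y \notin t -> F y = 0) -> \sum_(y <- s) F y = \sum_(y <- t) F y.
Proof.
move=> s_uniq t_uniq Fs Ft.
have restrict (u v : seq T) : (forall y, y \notin v -> F y = 0) ->
    \sum_(y <- u) F y = \sum_(y <- u | y \in v) F y.
  by move=> Fv; rewrite [RHS]big_mkcond; apply: eq_bigr => y _; case: ifPn => // /Fv.
rewrite (restrict s t) // (restrict t s) // -[LHS]big_filter -[RHS]big_filter.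
apply/perm_big/uniq_perm; rewrite ?filter_uniq // => y.
by rewrite !mem_filter andbC.
Qed.

Section FiniteKernels.
Local Open Scope sesquilinear_scope.
Local Open Scope complex_scope.
Variable R : realType.
Local Notation C := R[i].
Variable s : seq vertex.
Implicit Types (f g : vertex -> C) (k kA kB : vertex -> vertex -> C).

Definition kop (k : vertex -> vertex -> C) (f : vertex -> C) (x : vertex) : C :=
  \sum_(y <- s) k x y * f y.

Definition hermitian_on (k : vertex -> vertex -> C) : Prop :=
  {in s &, forall x y, k y x = (k x y)^*}.

Lemma eq_kop k f g : {in s, f =1 g} -> kop k f =1 kop k g.
Proof. by move=> fg x; apply: eq_big_seq => y ys; rewrite fg. Qed.

Lemma kopBl kA kB f x :
  kop (fun x y => kA x y - kB x y) f x = kop kA f x - kop kB f x.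
Proof. by rewrite -sumrB; apply: eq_bigr => y _; rewrite mulrBl. Qed.

Lemma kopBr k f g x :
  kop k (fun y => f y - g y) x = kop k f x - kop k g x.
Proof. by rewrite -sumrB; apply: eq_bigr => y _; rewrite mulrBr. Qed.

Lemma finnerC f g : finner s f g = (finner s g f)^*.
Proof.
rewrite /finner rmorph_sum; apply: eq_bigr => y _.
by rewrite rmorphM /= conjcK mulrC.
Qed.

Lemma finnerZl c f g : finner s (fun y => c * f y) g = c * finner s f g.
Proof. by rewrite mulr_sumr; apply: eq_bigr => y _; rewrite mulrA. Qed.

Lemma finnerZr c f g : finner s f (fun y => c * g y) = c^* * finner s f g.
Proof. by rewrite mulr_sumr; apply: eq_bigr => y _; rewrite rmorphM mulrCA. Qed.

Lemma eq_finner f f' g g' :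
  {in s, f =1 f'} -> {in s, g =1 g'} -> finner s f g = finner s f' g'.
Proof. by move=> ff' gg'; apply: eq_big_seq => x xs; rewrite ff' ?gg'. Qed.

Lemma finner_kop k f g :
  hermitian_on k -> finner s (kop k f) g = finner s f (kop k g).
Proof.
move=> hk; rewrite /finner /kop.
under eq_bigr do rewrite mulr_suml.
rewrite exchange_big /=; apply: eq_big_seq => y ys.
rewrite rmorph_sum mulr_sumr; apply: eq_big_seq => x xs.
by rewrite rmorphM /= (hk x y) // conjcK mulrCA !mulrA.
Qed.

Lemma hermitian_on_real k (r : vertex -> vertex -> R) :
  (forall x y, k x y = (r x y)%:C) -> (forall x y, r y x = r x y) -> hermitian_on k.
Proof. by move=> kr r_sym x y _ _; rewrite !kr conjc_real r_sym. Qed.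

Lemma hermitian_onB kA kB : hermitian_on kA -> hermitian_on kB ->
  hermitian_on (fun x y => kA x y - kB x y).
Proof. by move=> hA hB x y xs ys; rewrite rmorphB /= hA // hB. Qed.

Hypothesis s_uniq : uniq s.

Lemma finner_inj f f' :
  (forall g, finner s f g = finner s f' g) -> {in s, f =1 f'}.
Proof.
move=> ff' x xs; have := ff' (fun y => (x == y)%:R).
have indicator h : finner s h (fun y => (x == y)%:R) = h x.
  rewrite /finner (eq_bigr (fun y => (x == y)%:R * h y)) => [|y _].
    by rewrite sum_indicator // xs mul1r.
  by rewrite rmorph_nat mulrC.
by rewrite !indicator.
Qed.

Lemma kop_comm_of_invariant kA kB :
  hermitian_on kA -> hermitian_on kB ->
  (forall f, {in s, kop kB (kop kA (kop kB f)) =1 kop kA (kop kB f)}) ->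
  forall f, {in s, kop kA (kop kB f) =1 kop kB (kop kA f)}.
Proof.
move=> hA hB inv f; apply: finner_inj => g.
rewrite -(eq_finner (inv f) (in1W (frefl _))) !finner_kop //.
by rewrite (eq_finner (in1W (frefl _)) (inv g)) -!finner_kop.
Qed.

Local Notation N := (size s).
Local Notation vtx a := (nth (0%N, 0%N) s a).

Definition mx_of_kernel (k : vertex -> vertex -> C) : 'M[C]_N :=
  \matrix_(a, c) k (vtx c) (vtx a).

Definition rv_of (f : vertex -> C) : 'rV[C]_N := \row_a f (vtx a).

Definition fun_of_rv (u : 'rV[C]_N) (y : vertex) : C :=
  \sum_(a < N) (vtx a == y)%:R * u 0 a.

Lemma sum_nth (F : vertex -> C) : \sum_(y <- s) F y = \sum_(a < N) F (vtx a).
Proof. by rewrite (big_nth (0%N, 0%N)) big_mkord. Qed.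

Lemma rv_of_kop k f : rv_of (kop k f) = rv_of f *m mx_of_kernel k.
Proof.
apply/rowP => c; rewrite !mxE /kop sum_nth; apply: eq_bigr => a _.
by rewrite !mxE mulrC.
Qed.

Lemma eq_rv_of f g : {in s, f =1 g} -> rv_of f = rv_of g.
Proof. by move=> fg; apply/rowP => a; rewrite !mxE fg // mem_nth. Qed.

Lemma fun_of_rv_nth u (a : 'I_N) : fun_of_rv u (vtx a) = u 0 a.
Proof.
rewrite /fun_of_rv (bigD1 a) //= eqxx mul1r big1 ?addr0 // => c ca.
by rewrite nth_uniq // (inj_eq val_inj) (negbTE ca) mul0r.
Qed.

Lemma fun_of_rv_out u y : y \notin s -> fun_of_rv u y = 0.
Proof.
move=> yNs; rewrite /fun_of_rv big1 // => a _.
by case: eqP yNs => [<-|_]; rewrite ?mem_nth ?mul0r.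
Qed.

Lemma fun_of_rvK u : rv_of (fun_of_rv u) = u.
Proof. by apply/rowP => a; rewrite mxE fun_of_rv_nth. Qed.

Lemma mem_nth_ord x : x \in s -> {a : 'I_N | x = vtx a}.
Proof.
by move=> xs; exists (Ordinal (etrans (index_mem x s) xs)); rewrite nth_index.
Qed.

Lemma finner_fun_of_rv f v :
  finner s f (fun_of_rv v) = (rv_of f *m v^t*) 0 0.
Proof.
rewrite /finner sum_nth mxE; apply: eq_bigr => a _.
by rewrite fun_of_rv_nth !mxE.
Qed.

Lemma mx_of_kernel_hermitian k :
  hermitian_on k -> (mx_of_kernel k)^t* = mx_of_kernel k.
Proof. by move=> hk; apply/matrixP => a c; rewrite !mxE (hk (vtx a)) ?mem_nth. Qed.

Lemma mx_of_kernel_comm kA kB :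
  (forall f, {in s, kop kA (kop kB f) =1 kop kB (kop kA f)}) ->
  mx_of_kernel kA *m mx_of_kernel kB = mx_of_kernel kB *m mx_of_kernel kA.
Proof.
move=> AB; apply/row_matrixP => a; rewrite !rowE !mulmxA.
rewrite -[delta_mx 0 a]fun_of_rvK -!rv_of_kop.
by apply: eq_rv_of => x xs; rewrite AB.
Qed.

Definition joint_eigenbasis kA kB (e : 'I_N -> vertex -> C) (dA dB : 'I_N -> C)
    : Prop :=
  [/\ forall a x, x \notin s -> e a x = 0,
      forall a c, finner s (e a) (e c) = (a == c)%:R,
      forall a, {in s, forall x, kop kA (e a) x = dA a * e a x},
      forall a, {in s, forall x, kop kB (e a) x = dB a * e a x} &
      forall f, (forall a, finner s f (e a) = 0) -> {in s, forall x, f x = 0}].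

Lemma joint_eigenbasis_of_comm kA kB :
  hermitian_on kA -> hermitian_on kB ->
  (forall f, {in s, kop kA (kop kB f) =1 kop kB (kop kA f)}) ->
  {e : 'I_N -> vertex -> C & {dA : 'I_N -> C & {dB : 'I_N -> C |
    joint_eigenbasis kA kB e dA dB}}}.
Proof.
move=> hA hB AB.
have [U Uu /andP[diagA diagB]] := hermitian_codiagonalization
  (mx_of_kernel_hermitian hA) (mx_of_kernel_hermitian hB) (mx_of_kernel_comm AB).
pose e a := fun_of_rv (row a U).
pose d k a := (U *m mx_of_kernel k *m U^t*) a a.
have eigen k : is_diag_mx (U *m mx_of_kernel k *m U^t*) ->
    forall a, {in s, forall x, kop k (e a) x = d k a * e a x}.
  move=> /is_diag_mxP diag a x /mem_nth_ord[c ->].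
  have := congr1 (fun u : 'rV[C]_N => u 0 c) (rv_of_kop k (e a)).
  rewrite mxE /= => ->.
  rewrite fun_of_rvK /e fun_of_rv_nth -row_mul.
  rewrite -[U *m _](mulmxKtV _ Uu) //; set D := U *m _ *m _ in diag *.
  rewrite !mxE (bigD1 a) //= big1 ?addr0 //.
  by move=> b ba; rewrite diag ?mul0r // (inj_eq val_inj) eq_sym.
exists e, (d kA), (d kB); split; [| | exact: eigen | exact: eigen |].
- by move=> a x; apply: fun_of_rv_out.
- move=> a c; rewrite finner_fun_of_rv fun_of_rvK.
  have /matrixP/(_ a c) := unitarymxP Uu; rewrite !mxE => <-.
  by apply: eq_bigr => b _; rewrite !mxE.
- move=> f fe x /mem_nth_ord[c ->].
  have fU : rv_of f *m U^t* = 0.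
    apply/rowP => a; rewrite [RHS]mxE -(fe a) finner_fun_of_rv !mxE.
    by apply: eq_bigr => b _; rewrite !mxE.
  have := congr1 (fun u : 'rV[C]_N => u 0 c) (mulmxKtV (rv_of f) Uu (erefl _)).
  by rewrite fU mul0mx !mxE.
Qed.

End FiniteKernels.

Arguments joint_eigenbasis {R} s kA kB e dA dB.

Section Canopy.
Local Open Scope complex_scope.
Variable R : realType.
Local Notation C := R[i].
Variable K : nat.
Hypothesis K_gt0 : (0 < K)%N.
Variable b : R.
Implicit Types (f g psi : vertex -> C) (x y z : vertex) (n m k : nat).

Lemma mem_nbrs x y : (y \in nbrs K x) = adj K x y.
Proof.
rewrite /nbrs /adj inE; congr (_ || _).
case: x => [[|n] x2] /=; first by rewrite in_nil /parent; case: y.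
case: y => [y1 y2]; rewrite /parent /=.
apply/mapP/eqP => [[i hi [-> ->]]|[-> ->]].
  move: hi; rewrite mem_iota add0n => /andP[_ hi].
  by rewrite mulnC divnMDl // divn_small // addn0.
exists (y2 %% K)%N; first by rewrite mem_iota add0n ltn_pmod.
by rewrite mulnC -divn_eq.
Qed.

Lemma nbrs_uniq x : uniq (nbrs K x).
Proof.
case: x => [[|n] x2] //=; apply/andP; split.
  by apply/mapP => -[i _ [/eqP]]; rewrite -addn2 -{2}[n]addn0 eqn_add2l.
by rewrite map_inj_uniq ?iota_uniq // => i j [] /addnI.
Qed.

Definition kAB x y : C := (adj K x y)%:R + ((x == y) && (x.1 == 0%N))%:R * b%:C.

Lemma AplusB_kop s f x : uniq s -> (forall y, y \notin s -> f y = 0) ->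
  AplusB K b f x = kop s kAB f x.
Proof.
move=> s_uniq fs; rewrite /AplusB /kop.
under [RHS]eq_bigr do rewrite mulrDl.
rewrite big_split /=; congr (_ + _).
  rewrite /adjA (eq_big_seq (fun y => (adj K x y)%:R * f y)); last first.
    by move=> y; rewrite mem_nbrs => ->; rewrite mul1r.
  apply: eq_sum_supported => //; first exact: nbrs_uniq.
    by move=> y; rewrite mem_nbrs => /negbTE->; rewrite mul0r.
  by move=> y /fs->; rewrite mulr0.
rewrite (eq_bigr (fun y => (x == y)%:R * ((x.1 == 0%N)%:R * b%:C * f y))); last first.
  by move=> y _; rewrite -mulnb natrM -!mulrA.
rewrite sum_indicator // /potB.
have [xs|xNs] := boolP (x \in s); last by rewrite fs // !mulr0; case: ifP.
by rewrite mul1r; case: eqP; rewrite ?mul1r ?mul0r.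
Qed.

Lemma kAB_hermitian s : hermitian_on s kAB.
Proof.
apply: (@hermitian_on_real _ _ _
  (fun x y => (adj K x y)%:R + ((x == y) && (x.1 == 0%N))%:R * b)).
  by move=> x y; rewrite /kAB rmorphD rmorphM !rmorph_nat.
move=> x y /=; rewrite /adj orbC; congr (_ + _).
by case: (x =P y) => [->|/eqP]; rewrite ?eqxx // eq_sym => /negbTE->.
Qed.

(* The strict descendants of the vertex [(n, 0)]. *)
Definition desc n : seq vertex :=
  [seq (k, j) | k <- iota 0 n, j <- iota 0 (K ^ (n - k))].

Lemma mem_desc n x : (x \in desc n) = (x.1 < n)%N && (x.2 < K ^ (n - x.1))%N.
Proof.
apply/allpairsPdep/andP => [[k [j [hk hj ->]]]|[x1n x2n]].
  by move: hk hj; rewrite !mem_iota /= !add0n.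
by exists x.1, x.2; rewrite !mem_iota /= !add0n x1n x2n; case: x {x1n x2n}.
Qed.

Lemma desc_uniq n : uniq (desc n).
Proof.
apply: allpairs_uniq_dep => [|k _|]; rewrite ?iota_uniq //.
by move=> [k1 j1] [k2 j2] _ _ /= [-> ->].
Qed.

Lemma desc_subset m n : (m <= n)%N -> {subset desc m <= desc n}.
Proof.
move=> mn x; rewrite !mem_desc => /andP[x1m x2m].
rewrite (leq_trans x1m mn) (leq_trans x2m) // leq_pexp2l //.
exact: leq_sub2r.
Qed.

Lemma parent_desc n x :
  x \in desc n -> (parent K x \in desc n) = (x.1.+1 < n)%N.
Proof.
rewrite !mem_desc /parent /= => /andP[x1n x2n].
case: ltnP => //= x1n'.
by rewrite ltn_divLR // -expnSr subnSK.
Qed.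

Lemma desc_parent n x : parent K x \in desc n -> x \in desc n.
Proof.
rewrite !mem_desc /parent /= ltn_divLR // -expnSr => /andP[x1n].
by rewrite subnSK // (ltn_trans (ltnSn _) x1n).
Qed.

Lemma parent_desc_out n x y : x \notin desc n -> y \in desc n ->
  (x == parent K y) = (x == (n, 0%N)) && (y.1 == n.-1).
Proof.
move=> xNn yn; have := yn; rewrite mem_desc => /andP[y1n y2n].
apply/eqP/andP => [xy|[/eqP-> /eqP y1]].
  have y1n' : y.1.+1 = n.
    by apply/eqP; rewrite eqn_leq y1n leqNgt -(parent_desc yn) -xy.
  move: y2n; rewrite -y1n' subSn // subnn expn1 => y2K.
  by rewrite xy /parent /= y1n' divn_small // -y1n'.
have y1n' : y.1.+1 = n by move: y1n; rewrite y1; case: (n).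
move: y2n; rewrite -y1n' subSn // subnn expn1 => y2K.
by rewrite /parent y1n' divn_small.
Qed.

Definition layer_sum (s : seq vertex) f k : C := \sum_(y <- s) (y.1 == k)%:R * f y.

Definition layer_size n k : C := (K ^ (n - k))%:R.

(* [kerP n] is the orthogonal projection onto V_n, the functions on [desc n]
   with vanishing layer sums; [kerQ n] is the same projection acting on
   functions on [desc n.+1], so that [kerE n] projects onto the orthogonal
   complement of V_n in V_(n+1). *)
Definition kerP n x y : C := (x == y)%:R - (x.1 == y.1)%:R / layer_size n x.1.

Definition kerQ n x y : C := ((x \in desc n) && (y \in desc n))%:R * kerP n x y.

Definition kerE n x y : C := kerP n.+1 x y - kerQ n x y.

Lemma layer_size_neq0 n k : layer_size n k != 0.
Proof. by rewrite pnatr_eq0 -lt0n expn_gt0 K_gt0. Qed.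

Lemma layer_card n k :
  \sum_(y <- desc n) ((y.1 == k)%:R : C) = (k < n)%:R * layer_size n k.
Proof.
rewrite big_allpairs_dep.
rewrite (eq_bigr (fun i => (k == i)%:R * layer_size n i)) => [|i _].
  by rewrite sum_indicator ?iota_uniq // mem_iota.
by rewrite big_const_seq count_predT size_iota iter_addr_0 mulr_natr eq_sym.
Qed.

Lemma layer_sum_out n f k : (n <= k)%N -> layer_sum (desc n) f k = 0.
Proof.
move=> nk; rewrite /layer_sum big_seq big1 // => y.
rewrite mem_desc => /andP[y1n _].
by rewrite ltn_eqF ?mul0r // (leq_trans y1n nk).
Qed.

Lemma layer_sum_supported m n f k : (m <= n)%N ->
  (forall y, y \notin desc m -> f y = 0) ->
  layer_sum (desc n) f k = layer_sum (desc m) f k.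
Proof.
move=> mn fm; apply: eq_sum_supported; rewrite ?desc_uniq //.
  move=> y yNn; rewrite fm ?mulr0 //.
  by apply: contra yNn; apply: desc_subset.
by move=> y /fm->; rewrite mulr0.
Qed.

Lemma kop_kerP n f x : x \in desc n ->
  kop (desc n) (kerP n) f x = f x - layer_sum (desc n) f x.1 / layer_size n x.1.
Proof.
move=> xn; rewrite /kop /kerP.
under eq_bigr do rewrite mulrBl.
rewrite sumrB sum_indicator ?desc_uniq // xn mul1r mulr_suml; congr (_ - _).
by apply: eq_bigr => y _; rewrite eq_sym mulrAC.
Qed.

Lemma layer_sum_kerP n f k : layer_sum (desc n) (kop (desc n) (kerP n) f) k = 0.
Proof.
rewrite /layer_sum (eq_big_seq (fun y => (y.1 == k)%:R *
    (f y - layer_sum (desc n) f k / layer_size n k))); last first.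
  by move=> y yn; rewrite kop_kerP //; case: eqP => [->|_]; rewrite ?mul0r.
under eq_bigr do rewrite mulrBr.
rewrite sumrB -mulr_suml layer_card -/(layer_sum _ _ _).
case: ltnP => kn; last by rewrite layer_sum_out // !mul0r subr0.
by rewrite mul1r mulrCA mulfV ?layer_size_neq0 // mulr1 subrr.
Qed.

Lemma kerP_hermitian s n : hermitian_on s (kerP n).
Proof.
apply: (@hermitian_on_real _ _ _
  (fun x y => (x == y)%:R - (x.1 == y.1)%:R / (K ^ (n - x.1))%:R)).
  by move=> x y; rewrite /kerP rmorphB rmorphM fmorphV !rmorph_nat.
move=> x y /=; rewrite eq_sym (eq_sym y.1); congr (_ - _).
by case: (x.1 =P y.1) => [->|]; rewrite ?mul0r.
Qed.

Lemma kop_kerQ n f x :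
  kop (desc n.+1) (kerQ n) f x = (x \in desc n)%:R * kop (desc n) (kerP n) f x.
Proof.
rewrite /kop (eq_bigr (fun y =>
    (x \in desc n)%:R * ((y \in desc n)%:R * kerP n x y * f y))) => [|y _].
  rewrite -mulr_sumr (@eq_sum_supported _ _ _ (desc n)) ?desc_uniq //.
  - by congr (_ * _); apply: eq_big_seq => y ->; rewrite mul1r.
  - move=> y yNn1.
    by rewrite (contraNF (@desc_subset _ _ (leqnSn n) y)) ?mul0r.
  - by move=> y /negbTE->; rewrite !mul0r.
by rewrite /kerQ -mulnb natrM !mulrA.
Qed.

Lemma kerQ_hermitian s n : hermitian_on s (kerQ n).
Proof.
move=> x y xs ys; rewrite /kerQ rmorphM /= rmorph_nat andbC.
by rewrite (@kerP_hermitian s n x y xs ys).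
Qed.

Lemma kerE_hermitian s n : hermitian_on s (kerE n).
Proof. exact/hermitian_onB/kerQ_hermitian/kerP_hermitian. Qed.

Lemma layer_sum_kerQ n f k :
  layer_sum (desc n.+1) (kop (desc n.+1) (kerQ n) f) k = 0.
Proof.
rewrite (@layer_sum_supported n) // => [|y]; last first.
  by rewrite kop_kerQ => /negbTE->; rewrite mul0r.
rewrite -(layer_sum_kerP n f k); apply: eq_big_seq => y yn.
by rewrite kop_kerQ yn mul1r.
Qed.

Lemma layer_sum_kerE n f k :
  layer_sum (desc n.+1) (kop (desc n.+1) (kerE n) f) k = 0.
Proof.
rewrite /layer_sum (eq_bigr (fun y =>
    (y.1 == k)%:R * kop (desc n.+1) (kerP n.+1) f y -
    (y.1 == k)%:R * kop (desc n.+1) (kerQ n) f y)) => [|y _].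
  by rewrite sumrB -!/(layer_sum _ _ _) layer_sum_kerP layer_sum_kerQ subrr.
by rewrite kopBl mulrBr.
Qed.

Lemma kerE_annihilates n f : (forall y, y \notin desc n -> f y = 0) ->
  (forall k, layer_sum (desc n) f k = 0) ->
  {in desc n.+1, forall x, kop (desc n.+1) (kerE n) f x = 0}.
Proof.
move=> fn f0 x xn1; rewrite kopBl kop_kerQ kop_kerP // (@layer_sum_supported n) //.
rewrite f0 mul0r subr0; have [xn|xNn] := boolP (x \in desc n).
  by rewrite kop_kerP // f0 mul0r subr0 mul1r subrr.
by rewrite mul0r subr0 fn.
Qed.

Lemma sum_div_eq m q :
  \sum_(j <- iota 0 (K * m)) (((j %/ K)%N == q)%:R : C) = (q < m)%:R * K%:R.
Proof.
elim: m => [|m IH]; first by rewrite muln0 big_nil mul0r.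
rewrite mulnS addnC iotaD big_cat IH add0n.
rewrite (eq_big_seq (fun _ => (m == q)%:R)) => [|j]; last first.
  rewrite mem_iota => /andP[lo hi]; rewrite -(subnKC lo) mulnC divnMDl //.
  by rewrite divn_small ?addn0 // ltn_subLR // mulnC.
rewrite big_const_seq count_predT size_iota iter_addr_0 /=.
case: (m =P q) => [<-|/eqP mq]; first by rewrite ltnn ltnSn mul0r add0r mul1r.
have qm : (q == m) = false by rewrite eq_sym; apply: negbTE.
by rewrite ltnS [(q <= m)%N]leq_eqVlt qm mul0rn addr0.
Qed.

Lemma children_count n z k : z \in desc n ->
  \sum_(y <- desc n) ((y.1 == k) && (z == parent K y))%:R =
  (z.1 == k.+1)%:R * K%:R :> C.
Proof.
case: z => z1 z2 zn; rewrite big_allpairs_dep /=.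
rewrite (eq_bigr (fun k' => (k == k')%:R * \sum_(j <- iota 0 (K ^ (n - k')))
    ((z1 == k'.+1) && ((j %/ K)%N == z2))%:R)) => [|k' _]; last first.
  rewrite mulr_sumr; apply: eq_bigr => j _.
  by rewrite /parent xpair_eqE /= -natrM mulnb (eq_sym k) (eq_sym z2).
rewrite sum_indicator ?iota_uniq // mem_iota /=.
move: zn; rewrite mem_desc /= => /andP[z1n z2n].
case: (z1 =P k.+1) => [z1k|_]; last by rewrite mul0r big1 ?mulr0.
subst z1; have kn := ltnW z1n.
by rewrite -(subnSK kn) expnS add0n kn /= sum_div_eq z2n !mul1r.
Qed.

(* No vertex is both a child and the parent of another one. *)
Lemma adj_natE y z :
  (adj K y z)%:R = (z == parent K y)%:R + (y == parent K z)%:R :> C.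
Proof.
rewrite /adj; case: (z =P parent K y) => [zy|_]; last by rewrite add0r.
case: (y =P parent K z) => [yz|_]; last by rewrite addr0.
by move: zy; rewrite yz /parent => /(congr1 fst) /= /eqP; rewrite ltn_eqF // leqW.
Qed.

Lemma layer_weight_kAB n z k : z \in desc n ->
  \sum_(y <- desc n) (y.1 == k)%:R * kAB y z =
  K%:R * (z.1 == k.+1)%:R + (k < n)%:R * (z.1.+1 == k)%:R +
  (k == 0%N)%:R * b%:C * (z.1 == k)%:R.
Proof.
move=> zn; rewrite /kAB.
under eq_bigr do rewrite adj_natE !mulrDr.
rewrite !big_split /=; congr (_ + _ + _).
- rewrite mulrC -(children_count k zn).
  by apply: eq_bigr => y _; rewrite -natrM mulnb.
- rewrite (eq_bigr (fun y => (parent K z == y)%:R * (y.1 == k)%:R)) => [|y _].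
    rewrite sum_indicator ?desc_uniq // (parent_desc zn) /=.
    by case: eqP => [<-|_]; rewrite ?mulr0.
  by rewrite mulrC eq_sym.
rewrite (eq_bigr (fun y =>
    (z == y)%:R * ((y.1 == k)%:R * (y.1 == 0%N)%:R * b%:C))) => [|y _].
  rewrite sum_indicator ?desc_uniq // zn mul1r.
  by case: eqP => [->|_]; rewrite ?mul1r ?mulr1 ?mul0r ?mulr0.
rewrite -mulnb natrM [y == z]eq_sym.
by case: (z == y); rewrite ?mul0r ?mulr0 ?mul1r ?mulrA.
Qed.

(* [kAB] maps the functions with vanishing layer sums into themselves, since
   the layer weights of [layer_weight_kAB] only depend on the layer of [z]. *)
Lemma layer_sum_kAB n g k : (forall j, layer_sum (desc n) g j = 0) ->
  layer_sum (desc n) (kop (desc n) kAB g) k = 0.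
Proof.
move=> g0; rewrite /layer_sum /kop.
under eq_bigr do rewrite mulr_sumr.
rewrite exchange_big /= (eq_big_seq (fun z =>
    K%:R * ((z.1 == k.+1)%:R * g z) + (k < n)%:R * ((z.1.+1 == k)%:R * g z) +
    (k == 0%N)%:R * b%:C * ((z.1 == k)%:R * g z))) => [|z zn]; last first.
  under eq_bigr do rewrite mulrA.
  by rewrite -mulr_suml layer_weight_kAB // !mulrDl !mulrA.
rewrite !big_split /= -!mulr_sumr -!/(layer_sum _ _ _) !g0 !mulr0 add0r addr0.
case: k => [|j]; first by rewrite big1 ?mulr0 // => z _; rewrite mul0r.
by under eq_bigr do rewrite eqSS; rewrite -/(layer_sum _ _ _) g0 mulr0.
Qed.

(* Outside [desc n], only the root [(n, 0)] sees [desc n], through its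
   children in the top layer [n.-1]. *)
Lemma kop_kAB_out n g x :
  layer_sum (desc n) g n.-1 = 0 -> x \notin desc n -> kop (desc n) kAB g x = 0.
Proof.
move=> g0 xNn; rewrite /kop (eq_big_seq (fun y =>
    (x == (n, 0%N))%:R * ((y.1 == n.-1)%:R * g y))) => [|y yn].
  by rewrite -mulr_sumr -/(layer_sum _ _ _) g0 mulr0.
rewrite /kAB /adj (parent_desc_out xNn yn).
have -> : (y == parent K x) = false.
  by apply: contraNF xNn => /eqP yx; apply: desc_parent; rewrite -yx.
have -> : (x == y) = false by apply: contraNF xNn => /eqP->.
by rewrite /= mul0r addr0 -mulnb natrM mulrA.
Qed.

Lemma kAB_kerP_invariant n f : {in desc n, forall x,
  kop (desc n) (kerP n) (kop (desc n) kAB (kop (desc n) (kerP n) f)) x =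
  kop (desc n) kAB (kop (desc n) (kerP n) f) x}.
Proof.
move=> x xn; rewrite kop_kerP // layer_sum_kAB ?mul0r ?subr0 // => j.
exact: layer_sum_kerP.
Qed.

Lemma kAB_kerQ_invariant n f : {in desc n.+1, forall x,
  kop (desc n.+1) (kerQ n) (kop (desc n.+1) kAB (kop (desc n.+1) (kerQ n) f)) x =
  kop (desc n.+1) kAB (kop (desc n.+1) (kerQ n) f) x}.
Proof.
move=> x xn1; set g := kop (desc n.+1) (kerQ n) f.
have gn y : y \notin desc n -> g y = 0.
  by rewrite /g kop_kerQ => /negbTE->; rewrite mul0r.
have g0 j : layer_sum (desc n) g j = 0.
  rewrite -(layer_sum_kerP n f j); apply: eq_big_seq => y yn.
  by rewrite /g kop_kerQ yn mul1r.
have kABg y : kop (desc n.+1) kAB g y = kop (desc n) kAB g y.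
  apply: eq_sum_supported; rewrite ?desc_uniq // => z zN; rewrite gn ?mulr0 //.
  by apply: contra zN; apply: desc_subset.
rewrite kop_kerQ kABg; have [xn|xNn] := boolP (x \in desc n).
  rewrite mul1r kop_kerP // (_ : layer_sum _ _ _ = 0) ?mul0r ?subr0 ?kABg //.
  by rewrite -(layer_sum_kAB x.1 g0); apply: eq_bigr => y _; rewrite kABg.
by rewrite mul0r kop_kAB_out.
Qed.

Lemma kAB_kerE_comm n f : {in desc n.+1,
  kop (desc n.+1) kAB (kop (desc n.+1) (kerE n) f) =1
  kop (desc n.+1) (kerE n) (kop (desc n.+1) kAB f)}.
Proof.
move=> x xn1; rewrite (eq_kop _ (fun y _ => kopBl _ _ _ f y)) kopBr kopBl.
rewrite (kop_comm_of_invariant (desc_uniq _) (@kAB_hermitian _)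
  (@kerP_hermitian _ _) (@kAB_kerP_invariant n.+1)) //.
by rewrite (kop_comm_of_invariant (desc_uniq _) (@kAB_hermitian _)
  (@kerQ_hermitian _ _) (@kAB_kerQ_invariant n)).
Qed.

Lemma level_eigenbasis n :
  {e : 'I_(size (desc n.+1)) -> vertex -> C & {dM : _ & {dE : _ |
    joint_eigenbasis (desc n.+1) kAB (kerE n) e dM dE}}}.
Proof.
apply: (joint_eigenbasis_of_comm (desc_uniq _) (@kAB_hermitian _)
  (@kerE_hermitian _ _)); exact: kAB_kerE_comm.
Qed.

Lemma sqnorm_eq0 (w : C) : sqnorm w = 0 -> w = 0.
Proof.
case: w => u v; rewrite /sqnorm /= => /eqP; rewrite paddr_eq0 ?sqr_ge0 //.
by rewrite !sqrf_eq0 => /andP[/eqP-> /eqP->].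
Qed.

Lemma l2_layer_constant_eq0 psi : l2 psi ->
  (forall k j, psi (k, j) = psi (k, 0%N)) -> forall x, psi x = 0.
Proof.
move=> [M psiM] psi_layer [k j]; rewrite psi_layer.
set q := sqnorm (psi (k, 0%N)).
have qM L : q *+ L <= M.
  have := psiM [seq (k, j') | j' <- iota 0 L].
  rewrite map_inj_uniq ?iota_uniq => [/(_ isT)|j1 j2 [] //].
  rewrite big_map (eq_bigr (fun _ => q)) => [|j' _]; last by rewrite psi_layer.
  by rewrite big_const_seq count_predT size_iota iter_addr_0.
have q_ge0 : 0 <= q by rewrite addr_ge0 ?sqr_ge0.
have M_ge0 : 0 <= M by have := qM 0%N; rewrite mulr0n.
apply: sqnorm_eq0; apply/eqP; rewrite eq_le q_ge0 andbT leNgt; apply/negP => q_gt0.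
have := archi_boundP (divr_ge0 M_ge0 q_ge0); set L := Num.Def.archi_bound _.
by rewrite ltr_pdivrMr // mulr_natl => /lt_le_trans/(_ (qM L)); rewrite ltxx.
Qed.

Section LevelEigenbases.
Local Unset Implicit Arguments.
Variables (e : forall n, 'I_(size (desc n.+1)) -> vertex -> C)
          (dM dE : forall n, 'I_(size (desc n.+1)) -> C).
Hypothesis e_eigen :
  forall n, joint_eigenbasis (desc n.+1) kAB (kerE n) (e n) (dM n) (dE n).
Local Set Implicit Arguments.

Lemma level_layer_sum n a k :
  dE n a != 0 -> layer_sum (desc n.+1) (e n a) k = 0.
Proof.
move=> dEa; have [_ _ _ eigE _] := e_eigen n.
have := layer_sum_kerE n (e n a) k; rewrite /layer_sum.
rewrite (eq_big_seq (fun y => dE n a * ((y.1 == k)%:R * e n a y))) => [|y yn].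
  by rewrite -mulr_sumr => /eqP; rewrite mulf_eq0 (negbTE dEa) => /eqP.
by rewrite eigE // mulrCA.
Qed.

Lemma level_eigen n a x :
  dE n a != 0 -> AplusB K b (e n a) x = dM n a * e n a x.
Proof.
move=> dEa; have [supp _ eigM _ _] := e_eigen n.
rewrite (AplusB_kop x (desc_uniq n.+1) (supp a)).
have [xn|xNn] := boolP (x \in desc n.+1); first exact: eigM.
by rewrite supp // mulr0 kop_kAB_out // level_layer_sum.
Qed.

(* [e n a] is an eigenvector of [kerE n] for a nonzero eigenvalue, while
   [kerE n] annihilates the lower level [e m c]. *)
Lemma level_orthogonal_lt m n a c : (m < n)%N -> dE n a != 0 -> dE m c != 0 ->
  finner (desc n.+1) (e n a) (e m c) = 0.
Proof.
move=> mn dEa dEc.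
have [_ _ _ eigE _] := e_eigen n; have [supp _ _ _ _] := e_eigen m.
have supp' y : y \notin desc n -> e m c y = 0.
  by move=> yNn; apply: supp; apply: contra yNn; apply: desc_subset.
have : dE n a * finner (desc n.+1) (e n a) (e m c) = 0.
  rewrite -finnerZl -(eq_finner (eigE a) (in1W (frefl _))).
  rewrite finner_kop; last exact: kerE_hermitian.
  rewrite (eq_finner (in1W (frefl _)) (kerE_annihilates supp' _)) => [|k].
    by rewrite /finner big1 // => y _; rewrite conjc0 mulr0.
  by rewrite (layer_sum_supported _ mn (supp c)) level_layer_sum.
by move=> /eqP; rewrite mulf_eq0 (negbTE dEa) => /eqP.
Qed.

Lemma level_orthogonal m n a c : m != n -> dE n a != 0 -> dE m c != 0 ->
  finner (desc m.+1) (e n a) (e m c) = 0.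
Proof.
move=> mn dEa dEc; case: ltngtP mn => // [mn|nm] _.
  rewrite -(level_orthogonal_lt mn dEa dEc).
  apply: eq_sum_supported; rewrite ?desc_uniq //.
    by move=> y yNm; have [-> //] := e_eigen m; rewrite conjc0 mulr0.
  by move=> y yNn; have [-> //] := e_eigen n; rewrite mul0r.
by rewrite finnerC level_orthogonal_lt // conjc0.
Qed.

Lemma kerP_vanish psi :
  (forall n a, dE n a != 0 -> finner (desc n.+1) psi (e n a) = 0) ->
  forall n, {in desc n, forall x, kop (desc n) (kerP n) psi x = 0}.
Proof.
move=> psi_e; elim=> [|n IH] x; first by rewrite mem_desc.
have [_ _ _ eigE complete] := e_eigen n; apply: complete => a.
have Qpsi : {in desc n.+1, forall y, kop (desc n.+1) (kerQ n) psi y = 0}.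
  move=> y _; rewrite kop_kerQ.
  by have [yn|_] := boolP (y \in desc n); [rewrite IH ?mulr0 | rewrite mul0r].
rewrite (eq_finner (f' := kop (desc n.+1) (kerE n) psi) _ (in1W (frefl _))); last first.
  by move=> y yn; rewrite [RHS]kopBl Qpsi // subr0.
rewrite finner_kop; last exact: kerE_hermitian.
rewrite (eq_finner (in1W (frefl _)) (eigE a)) finnerZr.
have [->|dEa] := eqVneq (dE n a) 0; first by rewrite rmorph0 mul0r.
by rewrite psi_e // mulr0.
Qed.

Lemma layer_constant_of_kerP_vanish psi : (1 < K)%N ->
  (forall n, {in desc n, forall x, kop (desc n) (kerP n) psi x = 0}) ->
  forall k j, psi (k, j) = psi (k, 0%N).
Proof.
move=> K_gt1 psiP k j; pose n := (k + j.+1)%N.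
have mem j' : (j' <= j)%N -> (k, j') \in desc n.
  move=> j'j; rewrite mem_desc /= /n addKn -addSnnS leq_addr /=.
  exact: leq_ltn_trans j'j (ltnW (ltn_expl _ K_gt1)).
have := psiP n _ (mem j (leqnn j)); have := psiP n _ (mem 0%N (leq0n j)).
rewrite !kop_kerP ?mem // => /eqP; rewrite subr_eq0 => /eqP->.
by move=> /eqP; rewrite subr_eq0 => /eqP.
Qed.

Lemma has_fin_supp_eigen_ONB_of_levels :
  (1 < K)%N -> has_fin_supp_eigen_ONB K b.
Proof.
move=> K_gt1.
pose I := {p : {n : nat & 'I_(size (desc n.+1))} | dE (tag p) (tagged p) != 0}.
exists I, (fun i => e _ (tagged (val i))), (fun i => dM _ (tagged (val i))),
  (fun i => desc (tag (val i)).+1); split.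
- move=> [[n a] _] /=; have [supp _ _ _ _] := e_eigen n.
  by split; [exact: desc_uniq | exact: supp].
- by move=> [[n a] dEa] x /=; apply: level_eigen.
- by move=> [[n a] _] /=; have [_ -> _ _ _] := e_eigen n; rewrite eqxx.
- move=> [[n a] dEa] [[m c] dEc] /= ij.
  have [mn|mn] := eqVneq m n; last exact: level_orthogonal.
  subst m; have [_ -> _ _ _] := e_eigen n; case: eqVneq => // ac; subst c.
  by case: ij; congr exist; apply: bool_irrelevance.
- move=> psi l2psi psi_e; apply: l2_layer_constant_eq0 => //.
  apply: layer_constant_of_kerP_vanish => //; apply: kerP_vanish => n a dEa.
  exact: (psi_e (exist _ (existT _ n a) dEa)).
Qed.

End LevelEigenbases.

End Canopy.

Theorem theorem1p4 (R : realType) (K : nat) (b : R) :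
  (2 <= K)%N -> has_fin_supp_eigen_ONB K b.
Proof.
move=> K_gt1; have K_gt0 : (0 < K)%N := ltnW K_gt1.
pose B n := level_eigenbasis K_gt0 b n.
apply: (has_fin_supp_eigen_ONB_of_levels K_gt0 (e := fun n => projT1 (B n))
  (dM := fun n => projT1 (projT2 (B n)))
  (dE := fun n => sval (projT2 (projT2 (B n))))) => // n.
exact: svalP (projT2 (projT2 (B n))).
Qed.
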